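(* Let $n\ge2$ and let $\omega\in\widetilde{S}_n$ avoid $231$. Let $\alpha\in\{1,\dots,n\}$ be the index with $\omega_\alpha=\max\{\omega_1,\dots,\omega_n\}$. Then $n\le\omega_\alpha\le n+\alpha-1$, and $u=\sigma_\ell^{\,\omega_\alpha-n}(\omega)$ satisfies $\{u_1,\dots,u_n\}=\{1,\dots,n\}$ (so $u$ restricts to an ordinary permutation of $\{1,\dots,n\}$) with $u_{i}=n$ for $i=\alpha-\omega_\alpha+n$. Conversely, if $u\in\widetilde{S}_n$ with $\{u_1,\dots,u_n\}=\{1,\dots,n\}$ avoids $231$ and $u_i=n$, then $\sigma_r^{\,j}(u)$ avoids $231$ for every $0\le j\le n-i$.
   Context: For $n\ge 2$, the affine symmetric group $\widetilde{S}_n$ is the set of bijections $\omega:\mathbb{Z}\to\mathbb{Z}$ such that $\omega(i+n)=\omega(i)+n$ for all $i\in\mathbb{Z}$ and $\sum_{i=1}^n\omega(i)=\binom{n+1}{2}$; write $\omega_i=\omega(i)$. The map $\sigma_r:\widetilde{S}_n\to\widetilde{S}_n$ is defined by $\sigma_r(\omega)_i=\omega_{i-1}+1$ for all $i\in\mathbb{Z}$ (so $\sigma_r(\omega)_1=\omega_n-n+1$), and $\sigma_\ell=\sigma_r^{-1}$. For $p\in S_k$, $\omega$ contains $p$ if there exist integers $i_1<\cdots<i_k$ such that $\omega_{i_1}\cdots\omega_{i_k}$ has the same relative order as $p_1\cdots p_k$; otherwise $\omega$ avoids $p$. *)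

From Stdlib Require Import ZArith Lia List.
Open Scope Z_scope.

Fixpoint sum_w (w : Z -> Z) (m : nat) : Z :=
  match m with
  | O => 0
  | S k => sum_w w k + w (Z.of_nat (S k))
  end.

Definition affine_perm (n : nat) (w : Z -> Z) : Prop :=
  (forall x y, w x = w y -> x = y) /\
  (forall y, exists x, w x = y) /\
  (forall i, w (i + Z.of_nat n) = w i + Z.of_nat n) /\
  sum_w w n = Z.of_nat n * (Z.of_nat n + 1) / 2.

Definition sigma_r (w : Z -> Z) : Z -> Z := fun i => w (i - 1) + 1.
Definition sigma_l (w : Z -> Z) : Z -> Z := fun i => w (i + 1) - 1.

(* Pattern containment: p = [p_1; ...; p_k] (one-line notation, as integers).
   w contains p if there are indices i_1 < ... < i_k (given by f on 0..k-1)
   with w_{i_a} < w_{i_b} iff p_a < p_b. *)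
Definition contains (w : Z -> Z) (p : list Z) : Prop :=
  exists f : nat -> Z,
    (forall a b, (a < b < length p)%nat -> f a < f b) /\
    (forall a b, (a < length p)%nat -> (b < length p)%nat ->
       (w (f a) < w (f b) <-> nth a p 0 < nth b p 0)).

Definition avoids (w : Z -> Z) (p : list Z) : Prop := ~ contains w p.

Definition window_is_perm (n : nat) (u : Z -> Z) : Prop :=
  forall x, (exists i, 1 <= i <= Z.of_nat n /\ u i = x) <-> 1 <= x <= Z.of_nat n.

From Stdlib Require Import ZArith Lia List Classical.
From Stdlib Require FinFun.
Import ListNotations.
Open Scope Z_scope.

(** Any n consecutive positions c+1, ..., c+n of an affine permutation carry n
    distinct values summing to n c + n(n+1)/2.  This is the least possible sum
    of n distinct integers > c and the largest possible sum of n distinct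
    integers <= c+n, so such a window whose values are all > c, or all <= c+n,
    carries exactly the values c+1, ..., c+n.

    Let M = w_alpha and K = M - n, so that w_(alpha-n) = K.  All values left of
    alpha are < M, hence 231-avoidance puts every value right of alpha above
    every value left of alpha.  If some j in (alpha-n, K] has w_j > K, then
    231-avoidance with the pair (alpha-n, j) makes every value at positions
    K+1, ..., K+n exceed K; otherwise every value at positions K-n+1, ..., K is
    at most K.  Either way the window K+1, ..., K+n is mapped onto itself, which
    after shifting by sigma_l^K is the first claim; as w_alpha = K + n lies
    above that window, alpha > K as well.  The converse holds for every j,
    since sigma_r only translates positions and values. *)

Fixpoint sumZ (l : list Z) : Z :=
  match l with [] => 0 | x :: r => x + sumZ r end.

Lemma sumZ_app (l1 l2 : list Z) : sumZ (l1 ++ l2) = sumZ l1 + sumZ l2.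
Proof. induction l1; cbn; lia. Qed.

Lemma sumZ_map_opp (l : list Z) : sumZ (map Z.opp l) = - sumZ l.
Proof. induction l; cbn; lia. Qed.

Lemma NoDup_map_opp (l : list Z) : NoDup l -> NoDup (map Z.opp l).
Proof. apply FinFun.Injective_map_NoDup. intros x y; lia. Qed.

Lemma In_map_opp_le (l : list Z) (b : Z) :
  (forall x, In x l -> x <= b) -> forall y, In y (map Z.opp l) -> - b <= y.
Proof. intros Hb y (x & <- & Hx)%in_map_iff. specialize (Hb x Hx). lia. Qed.

Lemma In_min_exists (l : list Z) :
  l <> [] -> exists m, In m l /\ forall x, In x l -> m <= x.
Proof.
  induction l as [|a l IH]; intros Hl; [congruence|].
  destruct l as [|b l].
  - exists a. split; [now left|]. intros x [<-|[]]; lia.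
  - destruct IH as (m & Hm & Hmin); [discriminate|].
    destruct (Z.le_gt_cases a m).
    + exists a. split; [now left|].
      intros x [<-|Hx]; [lia|]. specialize (Hmin x Hx). lia.
    + exists m. split; [now right|]. intros x [<-|Hx]; [lia|auto].
Qed.

Lemma NoDup_remove_In (l : list Z) (x : Z) :
  NoDup l -> In x l ->
  exists r, NoDup r /\ ~ In x r /\ length l = S (length r) /\
            sumZ l = x + sumZ r /\ (forall y, In y r -> In y l).
Proof.
  intros Hnd Hx. destruct (in_split _ _ Hx) as (l1 & l2 & ->).
  exists (l1 ++ l2). repeat split.
  - exact (NoDup_remove_1 _ _ _ Hnd).
  - exact (NoDup_remove_2 _ _ _ Hnd).
  - rewrite !length_app. cbn. lia.
  - rewrite !sumZ_app. cbn. lia.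
  - intros y Hy. apply in_or_app. apply in_app_or in Hy as [Hy|Hy]; auto using in_cons.
Qed.

Lemma sumZ_NoDup_ge (l : list Z) (a : Z) :
  NoDup l -> (forall x, In x l -> a <= x) ->
  Z.of_nat (length l) * (2 * a + Z.of_nat (length l) - 1) <= 2 * sumZ l.
Proof.
  remember (length l) as m eqn:Hm. revert l a Hm.
  induction m as [|m IH]; intros l a Hm Hnd Ha.
  - destruct l; [cbn; lia | discriminate].
  - destruct (In_min_exists l) as (x0 & Hx0 & Hmin); [intros ->; discriminate|].
    destruct (NoDup_remove_In l x0 Hnd Hx0) as (r & Hr & Hx0r & Hlen & Hsum & Hsub).
    assert (Hr_gt : forall y, In y r -> x0 + 1 <= y).
    { intros y Hy. assert (y <> x0) by (intros ->; contradiction).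
      specialize (Hmin y (Hsub y Hy)). lia. }
    specialize (IH r (x0 + 1) ltac:(lia) Hr Hr_gt).
    specialize (Ha x0 Hx0). rewrite Hsum, Nat2Z.inj_succ. nia.
Qed.

Lemma sumZ_NoDup_le (l : list Z) (b : Z) :
  NoDup l -> (forall x, In x l -> x <= b) ->
  2 * sumZ l <= Z.of_nat (length l) * (2 * b - Z.of_nat (length l) + 1).
Proof.
  intros Hnd Hb.
  pose proof (sumZ_NoDup_ge _ _ (NoDup_map_opp l Hnd) (In_map_opp_le l b Hb)) as H.
  rewrite length_map, sumZ_map_opp in H. nia.
Qed.

Lemma NoDup_ge_sum_min_lt (l : list Z) (a : Z) :
  NoDup l -> (forall x, In x l -> a <= x) ->
  2 * sumZ l <= Z.of_nat (length l) * (2 * a + Z.of_nat (length l) - 1) ->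
  forall x, In x l -> x < a + Z.of_nat (length l).
Proof.
  intros Hnd Ha Hsum x Hx.
  destruct (NoDup_remove_In l x Hnd Hx) as (r & Hr & _ & Hlen & Hsumr & Hsub).
  pose proof (sumZ_NoDup_ge r a Hr (fun y Hy => Ha y (Hsub y Hy))) as Hge.
  rewrite Hlen, Nat2Z.inj_succ in *. nia.
Qed.

Lemma NoDup_le_sum_max_gt (l : list Z) (b : Z) :
  NoDup l -> (forall x, In x l -> x <= b) ->
  Z.of_nat (length l) * (2 * b - Z.of_nat (length l) + 1) <= 2 * sumZ l ->
  forall x, In x l -> b - Z.of_nat (length l) < x.
Proof.
  intros Hnd Hb Hsum x Hx.
  pose proof (NoDup_ge_sum_min_lt _ _ (NoDup_map_opp l Hnd) (In_map_opp_le l b Hb))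
    as H.
  rewrite length_map, sumZ_map_opp in H.
  specialize (H ltac:(nia) (- x) (in_map Z.opp _ _ Hx)). lia.
Qed.

Lemma double_half_pronic (m : Z) : 2 * (m * (m + 1) / 2) = m * (m + 1).
Proof.
  destruct (Z.Even_or_Odd m) as [[q ->] | [q ->]].
  - replace (2 * q * (2 * q + 1)) with (q * (2 * q + 1) * 2) by ring.
    rewrite Z.div_mul by lia. ring.
  - replace ((2 * q + 1) * (2 * q + 1 + 1)) with ((2 * q + 1) * (q + 1) * 2) by ring.
    rewrite Z.div_mul by lia. ring.
Qed.

Lemma Z_window_decomp (m : Z) (c i : Z) :
  0 < m -> exists t i0, i = i0 + t * m /\ c + 1 <= i0 <= c + m.
Proof.
  intros Hm. exists ((i - c - 1) / m), (i - (i - c - 1) / m * m).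
  pose proof (Z.div_mod (i - c - 1) m ltac:(lia)).
  pose proof (Z.mod_pos_bound (i - c - 1) m Hm). lia.
Qed.

Definition window (w : Z -> Z) (c : Z) (n : nat) : list Z :=
  map (fun k : nat => w (c + Z.of_nat k)) (seq 1 n).

Lemma In_window (w : Z -> Z) (c : Z) (n : nat) (x : Z) :
  In x (window w c n) <-> exists i, c + 1 <= i <= c + Z.of_nat n /\ w i = x.
Proof.
  unfold window. rewrite in_map_iff. split.
  - intros (k & <- & Hk%in_seq). exists (c + Z.of_nat k). split; [lia | reflexivity].
  - intros (i & Hi & <-). exists (Z.to_nat (i - c)). split.
    + f_equal. lia.
    + apply in_seq. lia.
Qed.

Lemma length_window (w : Z -> Z) (c : Z) (n : nat) : length (window w c n) = n.
Proof. unfold window. now rewrite length_map, length_seq. Qed.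

Lemma NoDup_window (w : Z -> Z) (c : Z) (n : nat) :
  (forall x y, w x = w y -> x = y) -> NoDup (window w c n).
Proof.
  intros w_inj. apply FinFun.Injective_map_NoDup; [|apply seq_NoDup].
  intros k k' Hk. apply w_inj in Hk. lia.
Qed.

Lemma window_S_cons (w : Z -> Z) (c : Z) (n : nat) :
  window w c (S n) = w (c + 1) :: window w (c + 1) n.
Proof.
  unfold window. cbn [seq map]. rewrite <- seq_shift, map_map.
  f_equal. apply map_ext. intros k. f_equal. lia.
Qed.

Lemma window_S_snoc (w : Z -> Z) (c : Z) (n : nat) :
  window w c (S n) = window w c n ++ [w (c + Z.of_nat (S n))].
Proof. unfold window. now rewrite seq_S, map_app. Qed.

Lemma sum_w_window (w : Z -> Z) (m : nat) : sum_w w m = sumZ (window w 0 m).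
Proof.
  induction m as [|m IH]; [reflexivity|].
  rewrite window_S_snoc, sumZ_app, <- IH. cbn [sum_w sumZ]. rewrite Z.add_0_l. lia.
Qed.

Lemma contains_231 (w : Z -> Z) (i j l : Z) :
  i < j < l -> w l < w i < w j -> contains w [2; 3; 1].
Proof.
  intros Hpos Hval. exists (fun a => match a with 0%nat => i | 1%nat => j | _ => l end).
  split.
  - intros a b Hab. cbn in Hab.
    destruct a as [|[|[|a]]]; destruct b as [|[|[|b]]]; lia.
  - intros a b Ha Hb. cbn in Ha, Hb.
    destruct a as [|[|[|a]]]; destruct b as [|[|[|b]]]; cbn; lia.
Qed.

Lemma iter_sigma_l (m : nat) (w : Z -> Z) (i : Z) :
  Nat.iter m sigma_l w i = w (i + Z.of_nat m) - Z.of_nat m.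
Proof.
  revert i. induction m as [|m IH]; intros i; cbn [Nat.iter].
  - cbn. now rewrite Z.add_0_r, Z.sub_0_r.
  - change (Nat.iter m sigma_l w (i + 1) - 1 = w (i + Z.of_nat (S m)) - Z.of_nat (S m)).
    rewrite IH. replace (i + 1 + Z.of_nat m) with (i + Z.of_nat (S m)) by lia.
    lia.
Qed.

Lemma iter_sigma_r (m : nat) (w : Z -> Z) (i : Z) :
  Nat.iter m sigma_r w i = w (i - Z.of_nat m) + Z.of_nat m.
Proof.
  revert i. induction m as [|m IH]; intros i; cbn [Nat.iter].
  - cbn. now rewrite Z.sub_0_r, Z.add_0_r.
  - change (Nat.iter m sigma_r w (i - 1) + 1 = w (i - Z.of_nat (S m)) + Z.of_nat (S m)).
    rewrite IH. replace (i - 1 - Z.of_nat m) with (i - Z.of_nat (S m)) by lia.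
    lia.
Qed.

Lemma contains_iter_sigma_r (u : Z -> Z) (p : list Z) (j : nat) :
  contains (Nat.iter j sigma_r u) p -> contains u p.
Proof.
  intros (f & Hf_incr & Hf_order). exists (fun a => f a - Z.of_nat j). split.
  - intros a b Hab. specialize (Hf_incr a b Hab). lia.
  - intros a b Ha Hb. rewrite <- (Hf_order a b Ha Hb), !iter_sigma_r. lia.
Qed.

Section AffineWindows.

Variables (n : nat) (w : Z -> Z).
Local Notation N := (Z.of_nat n).

Hypothesis n_pos : (0 < n)%nat.
Hypothesis w_inj : forall x y, w x = w y -> x = y.
Hypothesis w_surj : forall y, exists x, w x = y.
Hypothesis w_periodic : forall i, w (i + N) = w i + N.
Hypothesis w_sum : sum_w w n = N * (N + 1) / 2.

Lemma periodic_mul (t i : Z) : w (i + t * N) = w i + t * N.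
Proof.
  revert i. induction t as [|t IH|t IH] using Z.peano_ind; intros i.
  - rewrite Z.mul_0_l, !Z.add_0_r. reflexivity.
  - replace (i + Z.succ t * N) with (i + t * N + N) by ring.
    rewrite w_periodic, IH. ring.
  - pose proof (w_periodic (i + Z.pred t * N)) as Hper.
    replace (i + Z.pred t * N + N) with (i + t * N) in Hper by (rewrite <- Z.sub_1_r; ring).
    rewrite IH in Hper. nia.
Qed.

Lemma window_sum_succ (c : Z) : sumZ (window w (c + 1) n) = sumZ (window w c n) + N.
Proof.
  pose proof (f_equal sumZ (window_S_cons w c n)) as Hcons.
  rewrite window_S_snoc, sumZ_app in Hcons. cbn [sumZ] in Hcons.
  pose proof (w_periodic (c + 1)) as Hper.
  replace (c + Z.of_nat (S n)) with (c + 1 + N) in Hcons by lia. lia.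
Qed.

Lemma window_sum (c : Z) : 2 * sumZ (window w c n) = N * (2 * c + N + 1).
Proof.
  assert (Hshift : sumZ (window w c n) = sumZ (window w 0 n) + c * N).
  { induction c as [|c IH|c IH] using Z.peano_ind.
    - lia.
    - rewrite <- Z.add_1_r, window_sum_succ. lia.
    - pose proof (window_sum_succ (Z.pred c)) as H.
      rewrite Z.add_1_r, Z.succ_pred in H. nia. }
  rewrite Hshift, <- sum_w_window, w_sum. pose proof (double_half_pronic N). nia.
Qed.

Definition window_stable (c : Z) : Prop :=
  forall i, c + 1 <= i <= c + N -> c + 1 <= w i <= c + N.

Lemma window_stable_of_lower (c : Z) :
  (forall i, c + 1 <= i <= c + N -> c + 1 <= w i) -> window_stable c.
Proof.
  intros Hlow i Hi. split; [auto|].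
  pose proof (NoDup_ge_sum_min_lt (window w c n) (c + 1) (NoDup_window w c n w_inj))
    as Hlt.
  rewrite length_window in Hlt.
  enough (w i < c + 1 + N) by lia.
  apply Hlt.
  - intros x (j & Hj & <-)%In_window. auto.
  - pose proof (window_sum c). nia.
  - apply In_window. eauto.
Qed.

Lemma window_stable_of_upper (c : Z) :
  (forall i, c + 1 <= i <= c + N -> w i <= c + N) -> window_stable c.
Proof.
  intros Hup i Hi. split; [|auto].
  pose proof (NoDup_le_sum_max_gt (window w c n) (c + N) (NoDup_window w c n w_inj))
    as Hgt.
  rewrite length_window in Hgt.
  enough (c + N - N < w i) by lia.
  apply Hgt.
  - intros x (j & Hj & <-)%In_window. auto.
  - pose proof (window_sum c). nia.
  - apply In_window. eauto.
Qed.

Lemma window_stable_shift (c : Z) : window_stable c -> window_stable (c + N).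
Proof.
  intros Hs i Hi. pose proof (Hs (i - N) ltac:(lia)).
  pose proof (w_periodic (i - N)) as Hper. replace (i - N + N) with i in Hper by ring.
  lia.
Qed.

Lemma window_stable_below (c : Z) : window_stable c -> forall i, i <= c -> w i <= c.
Proof.
  intros Hs i Hi.
  destruct (Z_window_decomp N c i ltac:(lia)) as (t & i0 & -> & Hi0).
  rewrite periodic_mul. specialize (Hs i0 Hi0).
  assert (t <= -1) by nia. nia.
Qed.

Lemma window_stable_onto (c : Z) : window_stable c ->
  forall x, c + 1 <= x <= c + N -> exists i, c + 1 <= i <= c + N /\ w i = x.
Proof.
  intros Hs x Hx. destruct (w_surj x) as (z & <-).
  destruct (Z_window_decomp N c z ltac:(lia)) as (t & i0 & -> & Hi0).
  rewrite periodic_mul in Hx |- *. specialize (Hs i0 Hi0).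
  assert (t = 0) by nia. subst t. exists i0. split; [exact Hi0 | ring].
Qed.

Lemma window_is_perm_iter_sigma_l (c : nat) :
  window_stable (Z.of_nat c) -> window_is_perm n (Nat.iter c sigma_l w).
Proof.
  intros Hs x. split.
  - intros (i & Hi & <-). rewrite iter_sigma_l.
    pose proof (Hs (i + Z.of_nat c) ltac:(lia)). lia.
  - intros Hx. destruct (window_stable_onto _ Hs (x + Z.of_nat c)) as (i & Hi & Hwi); [lia|].
    exists (i - Z.of_nat c). rewrite iter_sigma_l.
    replace (i - Z.of_nat c + Z.of_nat c) with i by ring. lia.
Qed.

Section Avoid231.

Variable alpha : Z.
Hypothesis w_avoids : avoids w [2; 3; 1].
Hypothesis alpha_range : 1 <= alpha <= N.
Hypothesis w_max : forall k, 1 <= k <= N -> w k <= w alpha.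

Lemma max_window_ge : N <= w alpha.
Proof.
  pose proof (sumZ_NoDup_le (window w 0 n) (w alpha) (NoDup_window w 0 n w_inj)) as H.
  rewrite length_window in H.
  assert (Hle : forall x, In x (window w 0 n) -> x <= w alpha).
  { intros x (j & Hj & <-)%In_window. apply w_max. lia. }
  specialize (H Hle). pose proof (window_sum 0). nia.
Qed.

Lemma lt_max_before (i : Z) : i < alpha -> w i < w alpha.
Proof.
  intros Hi. destruct (Z_window_decomp N 0 i ltac:(lia)) as (t & i0 & -> & Hi0).
  rewrite periodic_mul. pose proof (w_max i0 ltac:(lia)).
  assert (t <= 0) by nia.
  destruct (Z.eq_dec t 0) as [-> | Ht].
  - assert (w i0 <> w alpha) by (intros E; apply w_inj in E; lia). lia.
  - nia.
Qed.

Lemma lt_across_max (i l : Z) : i < alpha < l -> w i < w l.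
Proof.
  intros Hil. destruct (Z.lt_ge_cases (w i) (w l)) as [|Hge]; [assumption|exfalso].
  assert (w i <> w l) by (intros E; apply w_inj in E; lia).
  pose proof (lt_max_before i ltac:(lia)).
  apply w_avoids, (contains_231 w i alpha l); lia.
Qed.

Lemma window_stable_max_shift : window_stable (w alpha - N).
Proof.
  set (K := w alpha - N).
  assert (HwK : w (alpha - N) = K).
  { pose proof (w_periodic (alpha - N)) as Hper.
    replace (alpha - N + N) with alpha in Hper by ring. unfold K. lia. }
  destruct (classic (exists j, alpha - N < j <= K /\ K < w j)) as [(j & Hj & Hwj) | Hnone].
  - apply window_stable_of_lower. intros i Hi.
    destruct (Z.lt_trichotomy i alpha) as [Hlt | [-> | Hgt]].
    + destruct (Z.lt_ge_cases (w i) (K + 1)) as [Hwi | Hwi]; [exfalso | exact Hwi].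
      assert (w i <> K) by (rewrite <- HwK; intros E; apply w_inj in E; lia).
      apply w_avoids, (contains_231 w (alpha - N) j i); lia.
    + unfold K. lia.
    + pose proof (lt_across_max (alpha - N) i ltac:(lia)). lia.
  - replace K with (K - N + N) by ring.
    apply window_stable_shift, window_stable_of_upper. intros j Hj.
    destruct (Z.lt_trichotomy j (alpha - N)) as [Hlt | [-> | Hgt]].
    + pose proof (lt_max_before (j + N) ltac:(lia)).
      pose proof (w_periodic j). unfold K in *. lia.
    + lia.
    + destruct (Z.le_gt_cases (w j) K); [lia | exfalso].
      apply Hnone. exists j. lia.
Qed.

Lemma max_shift_lt_alpha : w alpha - N < alpha.
Proof.
  destruct (Z.lt_ge_cases (w alpha - N) alpha) as [|Hge]; [assumption | exfalso].
  pose proof (window_stable_below _ window_stable_max_shift alpha Hge). lia.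
Qed.

Lemma sigma_l_normalizes_231_avoider :
  N <= w alpha <= N + alpha - 1 /\
  window_is_perm n (Nat.iter (Z.to_nat (w alpha - N)) sigma_l w) /\
  Nat.iter (Z.to_nat (w alpha - N)) sigma_l w (alpha - w alpha + N) = N.
Proof.
  pose proof max_window_ge. pose proof max_shift_lt_alpha.
  assert (HK : Z.of_nat (Z.to_nat (w alpha - N)) = w alpha - N) by (apply Z2Nat.id; lia).
  split; [lia | split].
  - apply window_is_perm_iter_sigma_l. rewrite HK. exact window_stable_max_shift.
  - rewrite iter_sigma_l, HK.
    replace (alpha - w alpha + N + (w alpha - N)) with alpha by ring. lia.
Qed.

End Avoid231.

End AffineWindows.

Theorem mainTheorem9 (n : nat) (Hn : (2 <= n)%nat) :
  (forall (w : Z -> Z) (alpha : Z),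
     affine_perm n w -> avoids w (2 :: 3 :: 1 :: nil) ->
     1 <= alpha <= Z.of_nat n ->
     (forall k, 1 <= k <= Z.of_nat n -> w k <= w alpha) ->
     Z.of_nat n <= w alpha <= Z.of_nat n + alpha - 1 /\
     window_is_perm n (Nat.iter (Z.to_nat (w alpha - Z.of_nat n)) sigma_l w) /\
     Nat.iter (Z.to_nat (w alpha - Z.of_nat n)) sigma_l w
       (alpha - w alpha + Z.of_nat n) = Z.of_nat n) /\
  (forall (u : Z -> Z) (i : Z),
     affine_perm n u -> window_is_perm n u -> avoids u (2 :: 3 :: 1 :: nil) ->
     u i = Z.of_nat n ->
     forall j : nat, Z.of_nat j <= Z.of_nat n - i ->
       avoids (Nat.iter j sigma_r u) (2 :: 3 :: 1 :: nil)).
Proof.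
  split.
  - intros w alpha (w_inj & w_surj & w_periodic & w_sum) w_avoids alpha_range w_max.
    apply sigma_l_normalizes_231_avoider; auto. lia.
  - intros u i _ _ u_avoids _ j _ Hcontains.
    exact (u_avoids (contains_iter_sigma_r u _ j Hcontains)).
Qed.
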